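(* For any instance of the $k$-Densest Subgraph problem on a graph with $n$ vertices, the DLA of QWOA satisfies $\dim(\mathfrak g_{\mathrm{QWOA},k\text{-Densest-Subgraph}})=\mathcal O(n^4)$.
   Context: $k$-Densest Subgraph on an undirected simple graph $G=(V,E)$, $V=\{1,\dots,n\}$, $1<k<n$: feasible solutions $\mathcal S'$ are the $z\in\{0,1\}^n$ of Hamming weight $k$, with cost $C(z)$ the number of edges with both endpoints selected; $N=|\mathcal S'|=\binom nk$. On $\mathbb C^{N}$ with basis $\{|z\rangle:z\in\mathcal S'\}$ (the indexed feasible subspace), $H_C$ is diagonal with $H_C|z\rangle=C(z)|z\rangle$ and $H_M$ is the $N\times N$ all-ones matrix (equivalent up to identity to the complete-graph adjacency matrix). $\mathfrak g_{\mathrm{QWOA},k\text{-Densest-Subgraph}}$ is the real Lie algebra generated by $iH_C$ and $iH_M$ (smallest real subspace containing them and closed under commutators); its dimension is its real dimension. *)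

From mathcomp Require Import all_boot all_order all_algebra all_field.
Set Implicit Arguments. Unset Strict Implicit. Unset Printing Implicit Defensive.
Import Order.TTheory GRing.Theory Num.Theory.
Local Open Scope ring_scope.

Definition simple_graph (n : nat) (e : rel 'I_n) : Prop :=
  (forall u v, e u v = e v u) /\ (forall u, ~~ e u u).

(* Feasible solutions: subsets of V of size k (= bitstrings of Hamming weight k). *)
Definition feasible (n k : nat) : {set {set 'I_n}} := [set A : {set 'I_n} | #|A| == k].

(* number of edges with both endpoints in A (each unordered edge counted once) *)
Definition kds_cost (n : nat) (e : rel 'I_n) (A : {set 'I_n}) : nat :=
  #|[set p : 'I_n * 'I_n | [&& (p.1 < p.2)%N, e p.1 p.2, p.1 \in A & p.2 \in A]]|.

(* dimension N = |S'|; basis |z> indexed by 'I_N via enumeration of S' *)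
Definition Ndim (n k : nat) : nat := #|feasible n k|.

Definition feas_of (n k : nat) (i : 'I_(Ndim n k)) : {set 'I_n} :=
  enum_val i.

Definition H_C (n k : nat) (e : rel 'I_n) : 'M[algC]_(Ndim n k) :=
  \matrix_(i, j) (if i == j then (kds_cost e (feas_of i))%:R else 0).

Definition H_M (n k : nat) : 'M[algC]_(Ndim n k) := const_mx 1.

Definition lie_bracket (m : nat) (A B : 'M[algC]_m) : 'M[algC]_m :=
  A *m B - B *m A.

Inductive lie_closure (m : nat) (G : seq 'M[algC]_m) : 'M[algC]_m -> Prop :=
| lc_gen x : x \in G -> lie_closure G x
| lc_lin (a : algC) x y : a \is Num.real -> lie_closure G x -> lie_closure G y ->
    lie_closure G (a *: x + y)
| lc_brk x y : lie_closure G x -> lie_closure G y -> lie_closure G (lie_bracket x y).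

Definition real_lin_indep (m : nat) (s : seq 'M[algC]_m) : Prop :=
  forall c : 'I_(size s) -> algC, (forall i, c i \is Num.real) ->
    \sum_(i < size s) c i *: s`_i = 0 -> forall i, c i = 0.

Definition real_dim_le (m : nat) (L : 'M[algC]_m -> Prop) (d : nat) : Prop :=
  forall s : seq 'M[algC]_m, (forall x, x \in s -> L x) -> real_lin_indep s ->
    (size s <= d)%N.

Definition g_QWOA_kDS (n k : nat) (e : rel 'I_n) : 'M[algC]_(Ndim n k) -> Prop :=
  lie_closure [:: 'i *: H_C k e; 'i *: H_M n k].

From mathcomp Require Import all_boot all_order all_algebra all_field zify.
Import GRing.Theory Num.Theory.
Local Open Scope ring_scope.
Set Implicit Arguments. Unset Strict Implicit. Unset Printing Implicit Defensive.

(* Group the basis states by their cost c in {0, ..., n^2}.  H_M is constant,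
   hence constant on every block {c(z) = a} x {c(z') = b}; commuting a
   block-constant matrix with H_C = diag(c) only rescales blocks, and brackets
   annihilate the diagonal part.  So every element of the Lie algebra is
   x H_C + P with P block-constant, i.e. lies in the complex span of
   (n^2 + 1)^2 + 1 fixed matrices, and a real-independent family in a complex
   span of R matrices has at most 2R members (its real and imaginary
   coordinates are independent even over C).  This gives dim <= 4 n^4. *)

Lemma map_mulmx_real (f : {additive algC -> algC}) p q r
    (v : 'M[algC]_(p, q)) (W : 'M[algC]_(q, r)) :
  (forall x y, y \is Num.real -> f (x * y) = f x * y) ->
  (forall i j, W i j \is Num.real) ->
  map_mx f (v *m W) = map_mx f v *m W.
Proof.
move=> fM Wr; apply/matrixP => i j; rewrite !mxE raddf_sum.
by apply: eq_bigr => l _; rewrite fM // mxE.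
Qed.

Lemma real_row_free p q (W : 'M[algC]_(p, q)) :
  (forall i j, W i j \is Num.real) ->
  (forall a : 'rV_p, (forall i, a 0 i \is Num.real) -> a *m W = 0 -> a = 0) ->
  row_free W.
Proof.
move=> Wr Windep; rewrite -kermx_eq0; apply/rowV0P => v /sub_kermxP vW.
(* Re v and Im v are real vectors in the kernel of the real matrix W. *)
have map_v_eq0 (f : {additive algC -> algC}) :
    (forall x y, y \is Num.real -> f (x * y) = f x * y) ->
    (forall x, f x \is Num.real) -> map_mx f v = 0.
  move=> fM freal; apply: Windep => [i|]; first by rewrite mxE.
  by rewrite -map_mulmx_real // vW map_mx0.
have vRe := map_v_eq0 _ (fun x y => @ReMr _ y ^~ x) (@Creal_Re _).
have vIm := map_v_eq0 _ (fun x y => @ImMr _ y ^~ x) (@Creal_Im _).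
apply/rowP => j; rewrite mxE [v 0 j]Crect.
move/rowP/(_ j): vRe; move/rowP/(_ j): vIm; rewrite !mxE => -> ->.
by rewrite mulr0 addr0.
Qed.

Lemma real_dim_le_span N (I : finType) (b : I -> 'M[algC]_N)
    (L : 'M[algC]_N -> Prop) :
  (forall A, L A -> exists c : I -> algC, A = \sum_x c x *: b x) ->
  real_dim_le L (#|I| + #|I|).
Proof.
move=> Lspan s sL sindep.
have /fin_all_exists [c sE] : forall i : 'I_(size s),
    exists c : I -> algC, s`_i = \sum_x c x *: b x.
  by move=> i; apply/Lspan/sL/mem_nth.
pose C : 'M[algC]_(size s, #|I|) := \matrix_(i, j) c i (enum_val j).
pose W := row_mx (map_mx (fun z => 'Re z) C) (map_mx (fun z => 'Im z) C).
suff: row_free W by rewrite /row_free => /eqP <-; exact: rank_leq_col.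
apply: real_row_free => [i j|a areal].
  by rewrite -[j]splitK; case: split => j'; rewrite ?row_mxEl ?row_mxEr mxE
    ?Creal_Re ?Creal_Im.
rewrite mul_mx_row -row_mx0 => /eq_row_mx [aRe aIm].
have aC : a *m C = 0.
  have -> : C = map_mx (fun z => 'Re z) C + 'i *: map_mx (fun z => 'Im z) C.
    by apply/matrixP => i j; rewrite !mxE -Crect.
  by rewrite mulmxDr -scalemxAr aRe aIm scaler0 addr0.
apply/rowP => i; rewrite mxE; apply: (sindep (fun i => a 0 i)) => //.
under eq_bigr => l _ do rewrite sE scaler_sumr.
rewrite exchange_big big1 //= => x _.
under eq_bigr => l _ do rewrite scalerA.
rewrite -scaler_suml.
have -> : \sum_l a 0 l * c l x = (a *m C) 0 (enum_rank x).
  by rewrite mxE; apply: eq_bigr => l _; rewrite mxE enum_rankK.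
by rewrite aC mxE scale0r.
Qed.

Lemma big_option R (idx : R) (op : Monoid.com_law idx) (X : finType)
    (F : option X -> R) :
  \big[op/idx]_y F y = op (F None) (\big[op/idx]_x F (Some x)).
Proof.
rewrite (bigD1 None) //=; congr (op _ _).
rewrite (reindex_omap Some id) //=.
  by apply: eq_bigl => x; rewrite eqxx.
by case.
Qed.

Section LieBracket.
Variable m : nat.
Implicit Types A B C : 'M[algC]_m.

Lemma lie_bracket_self A : lie_bracket A A = 0.
Proof. exact: subrr. Qed.

Lemma lie_bracketDl A B C :
  lie_bracket (A + B) C = lie_bracket A C + lie_bracket B C.
Proof. by rewrite /lie_bracket mulmxDl mulmxDr opprD addrACA. Qed.

Lemma lie_bracketDr A B C :
  lie_bracket A (B + C) = lie_bracket A B + lie_bracket A C.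
Proof. by rewrite /lie_bracket mulmxDl mulmxDr opprD addrACA. Qed.

Lemma lie_bracketZl a A B : lie_bracket (a *: A) B = a *: lie_bracket A B.
Proof. by rewrite /lie_bracket -scalemxAl -scalemxAr scalerBr. Qed.

Lemma lie_bracketZr a A B : lie_bracket A (a *: B) = a *: lie_bracket A B.
Proof. by rewrite /lie_bracket -scalemxAl -scalemxAr scalerBr. Qed.

End LieBracket.

Section ClassBlocks.
Variables (N : nat) (T : finType) (cls : 'I_N -> T) (w : T -> algC).

Definition blockconst (P : 'M[algC]_N) : Prop :=
  forall i j i' j', cls i = cls i' -> cls j = cls j' -> P i j = P i' j'.

Definition class_diag : 'M[algC]_N :=
  \matrix_(i, j) (if i == j then w (cls i) else 0).

Definition class_block (ab : T * T) : 'M[algC]_N :=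
  \matrix_(i, j) ((cls i == ab.1) && (cls j == ab.2))%:R.

Lemma class_diag_mulmx (Q : 'M[algC]_N) i j :
  (class_diag *m Q) i j = w (cls i) * Q i j.
Proof.
rewrite mxE (bigD1 i) //= big1 ?addr0; first by rewrite mxE eqxx.
by move=> l /negbTE nil; rewrite mxE eq_sym nil mul0r.
Qed.

Lemma mulmx_class_diag (Q : 'M[algC]_N) i j :
  (Q *m class_diag) i j = Q i j * w (cls j).
Proof.
rewrite mxE (bigD1 j) //= big1 ?addr0; first by rewrite mxE eqxx.
by move=> l /negbTE nlj; rewrite mxE nlj mulr0.
Qed.

Lemma blockconst_const a : blockconst (const_mx a).
Proof. by move=> *; rewrite !mxE. Qed.

Lemma blockconstD P Q : blockconst P -> blockconst Q -> blockconst (P + Q).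
Proof.
by move=> bP bQ i j i' j' ei ej; rewrite !mxE (bP _ _ i' j') ?(bQ _ _ i' j').
Qed.

Lemma blockconstZ a P : blockconst P -> blockconst (a *: P).
Proof. by move=> bP i j i' j' ei ej; rewrite !mxE (bP _ _ i' j'). Qed.

Lemma blockconstB P Q : blockconst P -> blockconst Q -> blockconst (P - Q).
Proof. by move=> bP bQ; rewrite -scaleN1r; apply/blockconstD/blockconstZ. Qed.

Lemma blockconstM P Q : blockconst P -> blockconst Q -> blockconst (P *m Q).
Proof.
move=> bP bQ i j i' j' ei ej; rewrite !mxE; apply: eq_bigr => l _.
by rewrite (bP i l i' l) // (bQ l j l j').
Qed.

Lemma blockconst_diagl Q : blockconst Q -> blockconst (class_diag *m Q).
Proof.
by move=> bQ i j i' j' ei ej; rewrite !class_diag_mulmx ei (bQ _ _ i' j').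
Qed.

Lemma blockconst_diagr Q : blockconst Q -> blockconst (Q *m class_diag).
Proof.
by move=> bQ i j i' j' ei ej; rewrite !mulmx_class_diag ej (bQ _ _ i' j').
Qed.

Lemma blockconst_span P : blockconst P ->
  exists c : T * T -> algC, P = \sum_ab c ab *: class_block ab.
Proof.
move=> bP; pose rep t := [pick i | cls i == t].
exists (fun ab =>
  if (rep ab.1, rep ab.2) is (Some i, Some j) then P i j else 0).
apply/matrixP => i j; rewrite summxE (bigD1 (cls i, cls j)) //= big1 ?addr0.
  rewrite !mxE !eqxx mulr1 /rep.
  case: pickP => [i' /eqP ei|/(_ i)]; last by rewrite eqxx.
  by case: pickP => [j' /eqP ej|/(_ j)]; [exact: bP | rewrite eqxx].
move=> [a b] neq; rewrite !mxE.
suff /negbTE -> : ~~ ((cls i == a) && (cls j == b)) by rewrite mulr0.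
by apply: contra neq => /andP [/eqP <- /eqP <-].
Qed.

Definition diag_blockconst (A : 'M[algC]_N) : Prop :=
  exists x, blockconst (A - x *: class_diag).

Lemma diag_blockconst_lin a A B :
  diag_blockconst A -> diag_blockconst B -> diag_blockconst (a *: A + B).
Proof.
move=> [x bA] [y bB]; exists (a * x + y).
rewrite scalerDl -scalerA opprD addrACA -scalerBr.
exact/blockconstD/bB/blockconstZ.
Qed.

Lemma diag_blockconst_bracket A B :
  diag_blockconst A -> diag_blockconst B -> diag_blockconst (lie_bracket A B).
Proof.
move=> [x bP] [y bQ]; exists 0; rewrite scale0r subr0.
move: bP bQ; set P := A - _; set Q := B - _ => bP bQ.
have eA : A = x *: class_diag + P by rewrite addrC subrK.
have eB : B = y *: class_diag + Q by rewrite addrC subrK.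
clearbody P Q; rewrite {}eA {}eB.
rewrite !(lie_bracketDl, lie_bracketDr, lie_bracketZl, lie_bracketZr).
rewrite lie_bracket_self !scaler0 add0r.
apply: blockconstD; last apply: blockconstD; try apply: blockconstZ.
- by apply: blockconstB; [apply: blockconst_diagl | apply: blockconst_diagr].
- by apply: blockconstB; [apply: blockconst_diagr | apply: blockconst_diagl].
- exact: blockconstB (blockconstM bP bQ) (blockconstM bQ bP).
Qed.

Definition class_basis (y : option (T * T)) : 'M[algC]_N :=
  if y is Some ab then class_block ab else class_diag.

Lemma diag_blockconst_span A : diag_blockconst A ->
  exists c : option (T * T) -> algC, A = \sum_y c y *: class_basis y.
Proof.
move=> [x /blockconst_span [c Pc]].
exists (fun y => if y is Some ab then c ab else x).
by rewrite big_option /= -Pc addrC subrK.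
Qed.

Lemma lie_closure_diag_blockconst (G : seq 'M[algC]_N) A :
  {in G, forall g, diag_blockconst g} -> lie_closure G A -> diag_blockconst A.
Proof.
move=> Gdb; elim=> {A} [g /Gdb //|a B C _ _ bB _ bC|B C _ bB _ bC].
  exact: diag_blockconst_lin.
exact: diag_blockconst_bracket.
Qed.

End ClassBlocks.

Lemma real_dim_le_mono N (L : 'M[algC]_N -> Prop) d d' :
  real_dim_le L d -> (d <= d')%N -> real_dim_le L d'.
Proof.
by move=> Ld le_dd' s sL sindep; exact: leq_trans (Ld s sL sindep) _.
Qed.

Lemma kds_cost_le n (e : rel 'I_n) A : (kds_cost e A <= n * n)%N.
Proof. by apply: leq_trans (max_card _) _; rewrite card_prod card_ord. Qed.

Theorem corollary4 : exists C : nat,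
  forall (n k : nat) (e : rel 'I_n), simple_graph e -> (1 < k)%N -> (k < n)%N ->
    real_dim_le (@g_QWOA_kDS n k e) (C * n ^ 4)%N.
Proof.
exists 4%N => n k e _ k_gt1 k_ltn.
pose cls (i : 'I_(Ndim n k)) : 'I_(n * n).+1 := inord (kds_cost e (feas_of i)).
pose w (t : 'I_(n * n).+1) : algC := (t : nat)%:R.
have HCE : H_C k e = class_diag cls w.
  apply/matrixP => i j; rewrite !mxE.
  by rewrite /w /cls inordK // ltnS kds_cost_le.
have gQWOA_db A : g_QWOA_kDS e A -> diag_blockconst cls w A.
  apply: lie_closure_diag_blockconst => g; rewrite !inE => /orP [] /eqP ->.
    by exists 'i; rewrite HCE subrr; apply: blockconst_const.
  by exists 0; rewrite scale0r subr0; apply/blockconstZ/blockconst_const.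
apply: real_dim_le_mono.
  apply: real_dim_le_span (class_basis cls w) _ _ => A /gQWOA_db.
  exact: diag_blockconst_span.
rewrite card_option card_prod card_ord (expnD n 2 2) !mulnn.
have : (2 ^ 2 <= n ^ 2)%N by rewrite leq_exp2r //; lia.
move: (n ^ 2)%N => t; nia.
Qed.
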